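(* Let $K\ge 1$, $m\ge 1$, and let $\mathcal L_1,\dots,\mathcal L_K:\mathbb R^m\to[0,\infty)$ be differentiable functions such that each $\mathcal L_k$ is $\nu_k$-smooth. Write $\boldsymbol{\mathcal L}(\vartheta)=(\mathcal L_1(\vartheta),\dots,\mathcal L_K(\vartheta))$. For every $\boldsymbol\lambda\in\Delta^K$ let $\vartheta_{\boldsymbol\lambda}\in\mathbb R^m$ be a minimizer of a fixed scalarization $s_{\boldsymbol\lambda}\circ\boldsymbol{\mathcal L}$ (in item 1, of the linear scalarization $\sum_k\lambda_k\mathcal L_k$), and let $\widehat\vartheta_{\boldsymbol\lambda}\in\mathbb R^m$ be arbitrary. Put $G_k:=\sup_{\boldsymbol\lambda\in\Delta^K}\|\nabla\mathcal L_k(\vartheta_{\boldsymbol\lambda})\|_2$, and for $G,\nu\ge 0$ $$\varepsilon(G,\nu,\boldsymbol\lambda):=G\|\widehat\vartheta_{\boldsymbol\lambda}-\vartheta_{\boldsymbol\lambda}\|_2+\tfrac{\nu}{2}\|\widehat\vartheta_{\boldsymbol\lambda}-\vartheta_{\boldsymbol\lambda}\|_2^2,\qquad \varepsilon_{\max}:=\max_{k\in[K],\,\boldsymbol\lambda\in\Delta^K}\varepsilon(G_k,\nu_k,\boldsymbol\lambda).$$ Then: 1. For linear scalarization, $\sum_k\lambda_k\mathcal L_k(\widehat\vartheta_{\boldsymbol\lambda})-\min_{\vartheta}\sum_k\lambda_k\mathcal L_k(\vartheta)\le \varepsilon\big(0,\sum_k\lambda_k\nu_k,\boldsymbol\lambda\big)$.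 2. For all $k$ and $\boldsymbol\lambda$, $\mathcal L_k(\widehat\vartheta_{\boldsymbol\lambda})-\mathcal L_k(\vartheta_{\boldsymbol\lambda})\le\varepsilon(G_k,\nu_k,\boldsymbol\lambda)$. 3. Let $\mathrm{PF}=\{\boldsymbol{\mathcal L}(\vartheta_{\boldsymbol\lambda}):\boldsymbol\lambda\in\Delta^K\}$ and $\widehat{\mathrm{PF}}=\{\boldsymbol{\mathcal L}(\widehat\vartheta_{\boldsymbol\lambda}):\boldsymbol\lambda\in\Delta^K\}$, and let $r\ge 2\sup_{\boldsymbol\lambda\in\Delta^K}\|\boldsymbol{\mathcal L}(\vartheta_{\boldsymbol\lambda})\|_\infty$ be such that $\widehat{\mathrm{PF}}\subset[0,r]^K$ and $\varepsilon_{\max}\le r/2$. Then $\mathrm{HV}_r(\widehat{\mathrm{PF}})\ge(1-2\varepsilon_{\max}/r)^K\,\mathrm{HV}_r(\mathrm{PF})$.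
   Context: $\Delta^K=\{\boldsymbol\lambda\in\mathbb R^K:\lambda_k\ge0,\sum_k\lambda_k=1\}$. A scalarization is a function $s_{\boldsymbol\lambda}:\mathbb R^K\to\mathbb R$ indexed by $\boldsymbol\lambda\in\Delta^K$; linear scalarization is $s_{\boldsymbol\lambda}(x)=\sum_k\lambda_kx_k$. A differentiable $f$ is $\nu$-smooth if $\nabla f$ is $\nu$-Lipschitz in $\ell_2$. For $\mathcal S\subset[0,r]^K$ the hypervolume is $\mathrm{HV}_r(\mathcal S)=\mathrm{vol}(\{x\in[0,r]^K:\exists s\in\mathcal S,\ s\preceq x\})$, where $\mathrm{vol}$ is Lebesgue measure on $\mathbb R^K$ and $s\preceq x$ means $s_i\le x_i$ for all $i$. *)

From mathcomp Require Import all_boot all_order all_algebra.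
From mathcomp Require Import all_classical all_reals all_analysis.
Set Implicit Arguments.
Unset Strict Implicit.
Unset Printing Implicit Defensive.
Import Order.TTheory GRing.Theory Num.Theory.
Import numFieldNormedType.Exports.
Local Open Scope classical_set_scope.
Local Open Scope ring_scope.

Section Defs.
Variable R : realType.

Definition l2norm (m : nat) (v : 'rV[R]_m) : R :=
  Num.sqrt (\sum_(i < m) (v 0 i) ^+ 2).

Definition grad (m : nat) (f : 'rV[R]_m -> R) (x : 'rV[R]_m) : 'rV[R]_m :=
  \row_(i < m) ('D_(delta_mx 0 i) f x).

Definition smooth (m : nat) (nu : R) (f : 'rV[R]_m -> R) : Prop :=
  (forall x, differentiable f x) /\
  (forall x y, l2norm (grad f x - grad f y) <= nu * l2norm (x - y)).

Definition simplex (K : nat) : set ('I_K -> R) :=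
  [set l | (forall k, 0 <= l k) /\ \sum_(k < K) l k = 1].

Definition linscal (K : nat) (l x : 'I_K -> R) : R := \sum_(k < K) l k * x k.

Definition supnorm (K : nat) (x : 'I_K -> R) : R := \big[Num.max/0]_(k < K) `|x k|.

Definition box (K : nat) (a b : 'I_K -> R) : set ('I_K -> R) :=
  [set x | forall i, a i <= x i <= b i].
Definition box_vol (K : nat) (a b : 'I_K -> R) : R :=
  \prod_(i < K) Num.max (b i - a i) 0.

(* Lebesgue (outer) measure on R^K: infimum of total volumes of countable
   box covers.  Coincides with Lebesgue measure on Lebesgue measurable sets. *)
Definition vol (K : nat) (A : set ('I_K -> R)) : \bar R :=
  ereal_inf [set v | exists (a b : nat -> 'I_K -> R),
     A `<=` \bigcup_n box (a n) (b n) /\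
     v = (\sum_(0 <= n <oo) (box_vol (a n) (b n))%:E)%E ].

Definition HV (K : nat) (r : R) (S : set ('I_K -> R)) : \bar R :=
  vol [set x | (forall i, 0 <= x i <= r) /\
               exists2 s, S s & forall i, s i <= x i].

End Defs.

(* Smoothness gives the descent inequality
     f (x + d) - f x <= <grad f x, d> + nu / 2 * |d|^2
   (mean value theorem along the segment plus Cauchy-Schwarz).  With |grad L_k| <= G_k this
   is item 2.  At a minimizer of the linear scalarization the weighted first-order term
   vanishes, since a quadratic t |-> a t + b t^2 that is nonnegative for all t has a = 0;
   this is item 1.  For item 3, every point of PF lies in [0, r/2]^K and is matched by a
   point of the approximate front that exceeds it by at most eps_max in each coordinate.
   Hence the affine map y |-> 2 eps_max + (1 - 2 eps_max / r) y sends the region of [0, r]^K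
   dominated by PF into the region dominated by the approximate front, and scales volumes
   by (1 - 2 eps_max / r)^K. *)

From mathcomp Require Import all_boot all_order all_algebra.
From mathcomp Require Import all_classical all_reals all_analysis.
From mathcomp Require Import ring lra.
Import Order.TTheory GRing.Theory Num.Theory.
Import numFieldNormedType.Exports.
Local Open Scope classical_set_scope.
Local Open Scope ring_scope.

Set Implicit Arguments.
Unset Strict Implicit.

Section Euclidean.
Variables (R : realType) (m : nat).
Implicit Types (u v w : 'rV[R]_m) (t : R).

Definition dotr u v : R := \sum_(i < m) u 0 i * v 0 i.

Lemma dotrBl u w v : dotr (u - w) v = dotr u v - dotr w v.
Proof. by rewrite /dotr -sumrB; apply: eq_bigr => i _; rewrite !mxE mulrBl. Qed.

Lemma dotrZr u v t : dotr u (t *: v) = t * dotr u v.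
Proof. by rewrite /dotr mulr_sumr; apply: eq_bigr => i _; rewrite mxE; ring. Qed.

Lemma l2norm_ge0 v : 0 <= l2norm v.
Proof. exact: sqrtr_ge0. Qed.

Lemma l2norm_sqr v : l2norm v ^+ 2 = \sum_(i < m) v 0 i ^+ 2.
Proof. by rewrite sqr_sqrtr // sumr_ge0 // => i _; exact: sqr_ge0. Qed.

Lemma l2norm_eq0 v : l2norm v = 0 -> forall i, v 0 i = 0.
Proof.
move=> v0 i; apply/eqP; rewrite -sqrf_eq0.
have /eqP : \sum_(j < m) v 0 j ^+ 2 = 0 by rewrite -l2norm_sqr v0 expr0n.
rewrite psumr_eq0 => [/allP/(_ i (mem_index_enum _)) //|j _]; exact: sqr_ge0.
Qed.

Lemma l2normZ t v : l2norm (t *: v) = `|t| * l2norm v.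
Proof.
rewrite /l2norm -sqrtr_sqr -sqrtrM ?sqr_ge0 //; congr Num.sqrt.
by rewrite mulr_sumr; apply: eq_bigr => i _; rewrite mxE; ring.
Qed.

Lemma l2norm_const1 : l2norm (const_mx 1 : 'rV[R]_m) = Num.sqrt m%:R.
Proof.
rewrite /l2norm (eq_bigr (fun=> 1)) => [|i _]; last by rewrite mxE expr1n.
by rewrite sumr_const card_ord.
Qed.

Lemma dotr_le_l2norm u v : dotr u v <= l2norm u * l2norm v.
Proof.
set A := l2norm u; set B := l2norm v.
have [A0|Au] := eqVneq A 0.
  by move: (A0) => /l2norm_eq0 u0; rewrite A0 mul0r /dotr big1 // => i _; rewrite u0 mul0r.
have [B0|Bv] := eqVneq B 0.
  by move: (B0) => /l2norm_eq0 v0; rewrite B0 mulr0 /dotr big1 // => i _; rewrite v0 mulr0.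
have AB0 : 0 < A * B by rewrite mulr_gt0 // lt0r ?Au ?Bv l2norm_ge0.
(* 0 <= |B u - A v|^2 = 2 A B (A B - <u, v>) *)
have key : 2 * (A * B) * dotr u v <= 2 * (A * B) * (A * B).
  have -> : 2 * (A * B) * (A * B) =
      B ^+ 2 * \sum_(i < m) u 0 i ^+ 2 + A ^+ 2 * \sum_(i < m) v 0 i ^+ 2.
    by rewrite -!l2norm_sqr -/A -/B; ring.
  rewrite /dotr !mulr_sumr -big_split /=.
  apply: ler_sum => i _; have := sqr_ge0 (u 0 i * B - v 0 i * A); nra.
have AB2 : 0 < 2 * (A * B) by rewrite mulr_gt0.
by rewrite -(ler_pM2l AB2).
Qed.

End Euclidean.

Section Smooth.
Variables (R : realType) (m : nat).
Implicit Types (f : 'rV[R]_m -> R) (x y d : 'rV[R]_m) (nu t : R).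

Lemma derive_grad f x d : differentiable f x -> 'D_d f x = dotr (grad f x) d.
Proof.
move=> df; rewrite deriveE // {1}(row_sum_delta d) linear_sum /dotr.
by apply: eq_bigr => i _; rewrite linearZ /= /grad mxE deriveE // mulrC.
Qed.

Lemma is_derive_line f x d t : (forall p, differentiable f p) ->
  is_derive t (1 : R) (fun u : R => f (x + u *: d)) (dotr (grad f (x + t *: d)) d).
Proof.
move=> df.
(* the difference quotients of the line at [t] are those of [f] at [x + t d] along [d] *)
have quot : (fun h : R => h^-1 *: (((fun u : R => f (x + u *: d)) \o shift t) (h *: 1)
                                  - f (x + t *: d)))
          = (fun h : R => h^-1 *: ((f \o shift (x + t *: d)) (h *: d) - f (x + t *: d))).
  apply/funext => h /=; congr (_ *: (f _ - _)).
  by rewrite /shift /= [h *: 1]mulr1 scalerDl addrCA addrC.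
apply: DeriveDef; first by rewrite /derivable quot; exact: diff_derivable.
by rewrite /derive quot -/(derive f _ d) derive_grad.
Qed.

Lemma smooth_ge0 nu f : (0 < m)%N -> smooth nu f -> 0 <= nu.
Proof.
move=> m0 [_ lip]; have := le_trans (l2norm_ge0 _) (lip (const_mx 1) 0).
by rewrite subr0 l2norm_const1 pmulr_lge0 // sqrtr_gt0 ltr0n.
Qed.

Lemma smooth_descent nu f x d : smooth nu f ->
  f (x + d) - f x <= dotr (grad f x) d + nu / 2 * l2norm d ^+ 2.
Proof.
move=> [df lip].
set c1 := dotr (grad f x) d; set c2 := nu / 2 * l2norm d ^+ 2.
pose h := (fun t => f (x + t *: d)) - c1 \*: (@id R) - c2 \*: (@id R) ^+ 2.
have hd t : is_derive t (1 : R) h (dotr (grad f (x + t *: d)) d - c1 - c2 * (2 * t)).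
  have -> : dotr (grad f (x + t *: d)) d - c1 - c2 * (2 * t) =
            dotr (grad f (x + t *: d)) d - c1 *: (1 : R) - c2 *: ((2%:R * t ^+ 1) *: (1 : R)).
    by rewrite /GRing.scale /=; ring.
  by apply: is_deriveB; first apply: is_deriveB; first exact: is_derive_line.
have hc : {within `[0, 1], continuous h}.
  by apply: derivable_within_continuous => t _; exact: (@ex_derive _ _ _ _ _ _ _ (hd t)).
have [c /[!in_itv] /= /andP[c0 _] h10] := MVT ltr01 (fun t _ => hd t) hc.
(* the increment of [h] is [<grad f (x + c d) - grad f x, d> - c nu |d|^2 <= 0] *)
have : h 1 - h 0 <= 0.
  rewrite h10 subr0 mulr1 -dotrBl.
  have lipc := lip (x + c *: d) x.
  rewrite addrAC subrr add0r l2normZ (ger0_norm (ltW c0)) in lipc.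
  have := dotr_le_l2norm (grad f (x + c *: d) - grad f x) d.
  have := ler_wpM2r (l2norm_ge0 d) lipc.
  rewrite /c2; nra.
have hE t : h t = f (x + t *: d) - c1 * t - c2 * t ^+ 2 by [].
by rewrite !hE scale1r scale0r addr0 expr1n expr0n /= !mulr0 mulr1 !subr0; lra.
Qed.

Lemma smooth_descent_norm nu f x y : smooth nu f ->
  f y - f x <= l2norm (grad f x) * l2norm (y - x) + nu / 2 * l2norm (y - x) ^+ 2.
Proof.
move=> sf; have := smooth_descent x (y - x) sf; rewrite [x + _]addrC subrK.
by have := dotr_le_l2norm (grad f x) (y - x); lra.
Qed.

Lemma smooth_descent_bound nu f x y (g : \bar R) :
  smooth nu f -> ((l2norm (grad f x))%:E <= g)%E ->
  ((f y - f x)%:E <= g * (l2norm (y - x))%:E + (nu / 2 * l2norm (y - x) ^+ 2)%:E)%E.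
Proof.
move=> sf gx; apply: le_trans (_ : _ <= (l2norm (grad f x) * l2norm (y - x))%:E
    + (nu / 2 * l2norm (y - x) ^+ 2)%:E)%E _.
  by rewrite -EFinD lee_fin smooth_descent_norm.
by rewrite leeD2r // EFinM lee_wpmul2r // lee_fin l2norm_ge0.
Qed.

End Smooth.

Lemma quad_ge0_lin_coef_eq0 (R : realFieldType) (a b : R) :
  (forall t, 0 <= t * a + t ^+ 2 * b) -> a = 0.
Proof.
suff le0 c : (forall t, 0 <= t * c + t ^+ 2 * b) -> c <= 0.
  move=> h; apply/eqP; rewrite eq_le le0 //= -oppr_le0 le0 // => t.
  by have := h (- t); rewrite mulNr mulrN sqrrN.
move=> h; rewrite leNgt; apply/negP => c0.
(* at [t = - c / (2 (|b| + 1))] the quadratic is negative *)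
pose t := c / (2 * (`|b| + 1)).
have b1 : 0 < 2 * (`|b| + 1) by rewrite mulr_gt0 // ltr_pwDr.
have tc : t * (2 * (`|b| + 1)) = c by rewrite /t divfK ?gt_eqF.
have t2 : 0 < t ^+ 2 by rewrite exprn_gt0 // divr_gt0.
have := h (- t); rewrite sqrrN mulNr -tc.
have := ler_norm b.
have : 0 < t ^+ 2 * (`|b| + 2) by rewrite mulr_gt0 // ltr_wpDl.
move: t2; rewrite expr2; nra.
Qed.

Section LinearScalarization.
Variables (R : realType) (K m : nat) (L : 'I_K -> 'rV[R]_m -> R) (nu l : 'I_K -> R).
Hypotheses (smoothL : forall k, smooth (nu k) (L k)) (l_ge0 : forall k, 0 <= l k).

Local Notation F x := (linscal l (fun k => L k x)).

Lemma linscal_descent x d t :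
  F (x + t *: d) - F x <=
  t * (\sum_(k < K) l k * dotr (grad (L k) x) d) +
  t ^+ 2 * ((\sum_(k < K) l k * nu k) / 2 * l2norm d ^+ 2).
Proof.
have descent k : L k (x + t *: d) - L k x <=
    t * dotr (grad (L k) x) d + nu k / 2 * t ^+ 2 * l2norm d ^+ 2.
  have := smooth_descent x (t *: d) (smoothL k).
  by rewrite dotrZr l2normZ exprMn real_normK ?num_real // mulrA.
have -> : t * (\sum_(k < K) l k * dotr (grad (L k) x) d) +
    t ^+ 2 * ((\sum_(k < K) l k * nu k) / 2 * l2norm d ^+ 2) =
    \sum_(k < K) l k * (t * dotr (grad (L k) x) d + nu k / 2 * t ^+ 2 * l2norm d ^+ 2).
  rewrite !mulr_suml !mulr_sumr -big_split /=.
  by apply: eq_bigr => k _; ring.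
rewrite /linscal -sumrB; apply: ler_sum => k _.
by rewrite -mulrBr ler_wpM2l.
Qed.

Lemma linscal_gap_at_min x y : (forall z, F x <= F z) ->
  F y - F x <= (\sum_(k < K) l k * nu k) / 2 * l2norm (y - x) ^+ 2.
Proof.
move=> xmin.
have descent := linscal_descent x (y - x).
(* first-order optimality: the slope along any line through the minimizer vanishes *)
have slope0 : \sum_(k < K) l k * dotr (grad (L k) x) (y - x) = 0.
  apply: quad_ge0_lin_coef_eq0 => t.
  by apply: le_trans (descent t); rewrite subr_ge0.
by have := descent 1; rewrite scale1r [x + _]addrC subrK slope0 mulr0 add0r expr1n mul1r.
Qed.

End LinearScalarization.

Section Hypervolume.
Variables (R : realType) (K : nat).
Implicit Types (a b x : 'I_K -> R) (A B S T : set ('I_K -> R)) (c e r : R).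

Lemma supnorm_ge x i : `|x i| <= supnorm x.
Proof.
rewrite /supnorm (bigD1 i) //=.
by case: (lerP `|x i| (\big[Num.max/0]_(j < K | j != i) `|x j|)) => // /ltW.
Qed.

Lemma simplex_uniform : (0 < K)%N -> simplex (fun _ : 'I_K => K%:R^-1 : R).
Proof.
move=> K0; split => [k|]; first by rewrite invr_ge0.
by rewrite sumr_const card_ord -[_ *+ _]mulr_natr mulVf // pnatr_eq0 -lt0n.
Qed.

Lemma box_vol_ge0 a b : 0 <= box_vol a b.
Proof. by apply: prodr_ge0 => i _; rewrite le_max lexx orbT. Qed.

Lemma vol_ge0 A : (0 <= vol A)%E.
Proof.
apply: le_ereal_inf_tmp => _ [a [b [_ ->]]].
by apply: nneseries_ge0 => n _ _; rewrite lee_fin box_vol_ge0.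
Qed.

Lemma box_vol_affine e0 c a b : 0 < c ->
  box_vol (fun i => (a i - e0) / c) (fun i => (b i - e0) / c) = c^-1 ^+ K * box_vol a b.
Proof.
move=> c0; have -> : c^-1 ^+ K = \prod_(i < K) c^-1 by rewrite prodr_const card_ord.
rewrite /box_vol -big_split /=.
apply: eq_bigr => i _; rewrite maxr_pMr ?invr_ge0 ?ltW // mulr0.
by congr Num.max; field; rewrite gt_eqF.
Qed.

(* Pulling a box cover of [B] back along the affine map covers [A] with [c^-K] times the volume. *)
Lemma vol_affine_le e0 c A B : 0 < c ->
  (forall x, A x -> B (fun i => e0 + c * x i)) -> ((c ^+ K)%:E * vol A <= vol B)%E.
Proof.
move=> c0 AB; apply: le_ereal_inf_tmp => _ [a [b [cov ->]]].
pose pull (a : nat -> 'I_K -> R) n i := (a n i - e0) / c.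
have volA : (vol A <= (c^-1 ^+ K)%:E * \sum_(0 <= n <oo) (box_vol (a n) (b n))%:E)%E.
  rewrite -nneseriesZl => [|n _]; last by rewrite lee_fin box_vol_ge0.
  under eq_eseriesr => n _ do rewrite -EFinM -(box_vol_affine e0 _ _ c0).
  apply: ereal_inf_lbound; exists (pull a), (pull b); split => //.
  move=> x /AB /cov [n _ /= abn]; exists n => //= i.
  have /andP[ai bi] := abn i.
  by rewrite !ler_pdivrMr ?ler_pdivlMr //; apply/andP; split; lra.
have cK : (0 <= (c ^+ K)%:E)%E by rewrite lee_fin exprn_ge0 ?ltW.
apply: le_trans (lee_wpmul2l cK volA) _.
by rewrite muleA -EFinM exprVn mulfV ?mul1e // expf_neq0 ?gt_eqF.
Qed.

(* The affine map [y |-> 2 e + (1 - 2 e / r) y] keeps [[0, r]^K] and sends every point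
   dominated by [s] to a point dominated by any [t <= s + e], as [s <= r / 2]. *)
Lemma HV_approx_ge r e S T : (0 < K)%N -> 0 <= e -> 2 * e <= r ->
  (forall s, S s -> forall i, s i <= r / 2) ->
  (forall s, S s -> exists2 t, T t & forall i, t i <= s i + e) ->
  (((1 - 2 * e / r) ^+ K)%:E * HV r S <= HV r T)%E.
Proof.
move=> K0 e0 er Shalf ST.
set a := 2 * e / r.
have [a0 a1 ar] : [/\ 0 <= a, a <= 1 & a * r = 2 * e].
  have [r0|r0] := eqVneq r 0.
    have e_0 : e = 0 by lra.
    by rewrite /a r0 e_0 !(mulr0, mul0r); split; rewrite ?ler01.
  split; last by rewrite /a divfK.
    by rewrite /a divr_ge0 ?mulr_ge0 //; lra.
  by rewrite /a ler_pdivrMr ?mul1r //; rewrite lt_def r0 /=; lra.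
have [c0|c0] := eqVneq (1 - a) 0.
  by rewrite c0 expr0n gtn_eqF // mul0e; exact: vol_ge0.
apply: (@vol_affine_le (2 * e)); first by rewrite lt_def c0 /=; lra.
move=> y [yr [s Ss sy]]; split => [i|].
  by have /andP[y0 yr'] := yr i; apply/andP; split; nra.
have [t Tt ts] := ST s Ss; exists t => // i.
have := ts i; have := Shalf s Ss i; have := sy i; have /andP[y0 yr'] := yr i.
nra.
Qed.

Lemma HV_front_ge (I : Type) (D : set I) (P Q : I -> 'I_K -> R) r e :
  (0 < K)%N -> 0 <= e -> 2 * e <= r ->
  (2%:E * ereal_sup [set (supnorm (P l))%:E | l in D] <= r%:E)%E ->
  (forall l, D l -> forall i, Q l i <= P l i + e) ->
  (((1 - 2 * e / r) ^+ K)%:E * HV r (P @` D) <= HV r (Q @` D))%E.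
Proof.
move=> K0 e0 er hr PQ; apply: HV_approx_ge => //.
  move=> _ [l Dl <-] i.
  have : ((2 * supnorm (P l))%:E <= r%:E)%E.
    apply: le_trans hr; rewrite EFinM; apply: lee_wpmul2l => //.
    by apply: ereal_sup_ubound; exists l.
  by rewrite lee_fin; have := le_trans (ler_norm _) (supnorm_ge (P l) i); lra.
by move=> _ [l Dl <-]; exists (Q l); [exists l | exact: PQ].
Qed.

End Hypervolume.

Unset Implicit Arguments.
Set Strict Implicit.

Theorem proposition1 (R : realType) (K m : nat) (hK : (0 < K)%N) (hm : (0 < m)%N)
  (L : 'I_K -> 'rV[R]_m -> R) (nu : 'I_K -> R)
  (hL0 : forall k x, 0 <= L k x)
  (hLs : forall k, smooth (nu k) (L k))
  (s : ('I_K -> R) -> ('I_K -> R) -> R)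
  (th thh : ('I_K -> R) -> 'rV[R]_m)
  (hmin : forall l, simplex l -> forall t, s l (fun k => L k (th l)) <= s l (fun k => L k t)) :
  let Lv := fun t : 'rV[R]_m => (fun k => L k t) : 'I_K -> R in
  let G := fun k => ereal_sup [set (l2norm (grad (L k) (th l)))%:E | l in simplex (R:=R) (K:=K)] in
  let eps := fun (g : \bar R) (n : R) (l : 'I_K -> R) =>
     (g * (l2norm (thh l - th l))%:E + (n / 2 * (l2norm (thh l - th l)) ^+ 2)%:E)%E in
  let epsmax := ereal_sup [set e | exists (k : 'I_K) (l : 'I_K -> R), simplex l /\ e = eps (G k) (nu k) l] in
  ((forall l, simplex l -> forall t, linscal l (Lv (th l)) <= linscal l (Lv t)) ->
   forall l, simplex l ->
     ((linscal l (Lv (thh l)) - linscal l (Lv (th l)))%:E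
       <= eps 0%E (\sum_(k < K) l k * nu k)%R l)%E)
  /\
  (forall k l, simplex l -> ((L k (thh l) - L k (th l))%:E <= eps (G k) (nu k) l)%E)
  /\
  (forall r : R,
     (2%:E * ereal_sup [set (supnorm (Lv (th l)))%:E | l in simplex (R:=R) (K:=K)] <= r%:E)%E ->
     (forall l, simplex l -> forall k, 0 <= L k (thh l) <= r) ->
     (epsmax <= (r / 2)%:E)%E ->
     (((1 - 2 * fine epsmax / r) ^+ K)%:E
        * HV r [set Lv (th l) | l in simplex (R:=R) (K:=K)]
      <= HV r [set Lv (thh l) | l in simplex (R:=R) (K:=K)])%E).
Proof.
move=> Lv G eps epsmax.
have gradG k l : simplex l -> ((l2norm (grad (L k) (th l)))%:E <= G k)%E.
  by move=> hl; apply: ereal_sup_ubound; exists l.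
have gap k l : simplex l -> ((L k (thh l) - L k (th l))%:E <= eps (G k) (nu k) l)%E.
  by move=> hl; exact: smooth_descent_bound (hLs k) (gradG k l hl).
split; [|split => //].
  move=> lin_min l hl; rewrite /eps mul0e add0e lee_fin.
  exact (linscal_gap_at_min hLs hl.1 (thh l) (lin_min l hl)).
move=> r hr _ heps.
have eps_ge0 k l : simplex l -> (0 <= eps (G k) (nu k) l)%E.
  move=> hl; apply: adde_ge0; last first.
    by rewrite lee_fin mulr_ge0 ?sqr_ge0 ?divr_ge0 ?(smooth_ge0 hm (hLs k)).
  apply: mule_ge0; last by rewrite lee_fin l2norm_ge0.
  by apply: le_trans (gradG k l hl); rewrite lee_fin l2norm_ge0.
have eps_le k l : simplex l -> (eps (G k) (nu k) l <= epsmax)%E.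
  by move=> hl; apply: ereal_sup_ubound; exists k, l.
have em0 : (0 <= epsmax)%E.
  have unif := simplex_uniform R hK.
  exact: le_trans (eps_ge0 (Ordinal hK) _ unif) (eps_le (Ordinal hK) _ unif).
have emE : epsmax = (fine epsmax)%:E.
  by rewrite fineK // ge0_fin_numE // (le_lt_trans heps) // ltey.
set e := fine epsmax in emE *.
apply: (HV_front_ge hK _ _ hr) => [||l hl i].
- by rewrite -lee_fin -emE.
- by rewrite -ler_pdivlMl // mulrC -lee_fin -emE.
- have := le_trans (gap i l hl) (eps_le i l hl).
  by rewrite emE lee_fin /Lv; lra.
Qed.
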